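(* Let $A$ be a $\boldsymbol{\mathit{ba}\ell}$-algebra and $\alpha:A\to D(\mathbb R[B])$ as in the context. Then $\alpha$ is compact: whenever $S,T\subseteq A$ and $0<\varepsilon\in\mathbb R$ satisfy $\bigwedge\alpha[S]+\varepsilon\le\bigvee\alpha[T]$ in $D(\mathbb R[B])$, there are finite $S_0\subseteq S$ and $T_0\subseteq T$ with $\bigwedge S_0\le\bigvee T_0$ in $A$.
   Context: A $\boldsymbol{\mathit{ba}\ell}$-algebra is a commutative unital lattice-ordered algebra $A$ over $\mathbb R$ that is bounded (for every $a\in A$ there is an integer $n\ge1$ with $a\le n\cdot1$) and archimedean (if $na\le b$ for all $n\ge1$ then $a\le0$); reals $r$ are identified with $r\cdot1$. For $a\in A$: $a^+=a\vee0$, $a^-=(-a)\vee0$. An $\ell$-ideal is a ring ideal $I$ with $|a|\le|b|$, $b\in I\Rightarrow a\in I$; it is archimedean if $A/I$ is archimedean. ${\sf Arch}(A)$ is the set of archimedean $\ell$-ideals ordered by inclusion, a bounded distributive lattice (a frame) with meet $\cap$ and join $I\vee J$ the least archimedean $\ell$-ideal containing $I\cup J$. $B$ is the free boolean extension of the bounded distributive lattice ${\sf Arch}(A)$; ${\sf Arch}(A)\subseteq B$ and $\lnot$ is complement in $B$. For a boolean algebra $B$, $\mathbb R[B]$ is the quotient of $\mathbb R[x_e\mid e\in B]$ by the ideal generated by $x_{e\wedge f}-x_ex_f$, $x_{e\vee f}-(x_e+x_f-x_ex_f)$, $x_{\lnot e}-(1-x_e)$, $x_0$; it is a $\boldsymbol{\mathit{ba}\ell}$-algebra.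 $D(\mathbb R[B])$ is its Dedekind completion (Dedekind complete $\boldsymbol{\mathit{ba}\ell}$-algebra containing $\mathbb R[B]$, every element a join of elements of $\mathbb R[B]$). $\alpha(a)=-s+\bigvee\{rx_{\lnot I}\mid r\in\mathbb R,\ I\in{\sf Arch}(A),\ (a+s-r)^-\in I\}$ for any $s\in\mathbb R$ with $a+s\ge0$ (well defined, independent of $s$). *)

From HB Require Import structures.
From mathcomp Require Import all_boot all_order all_algebra.
From mathcomp Require Import reals.
Set Implicit Arguments. Unset Strict Implicit. Unset Printing Implicit Defensive.
Import Order.TTheory GRing.Theory Num.Theory.
Local Open Scope ring_scope.

Section BaL.
Variables (R : realType) (A : comAlgType R).

Record baL := BaL {
  bale : A -> A -> Prop;
  bajoin : A -> A -> A;
  bameet : A -> A -> A;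
  bale_refl : forall a, bale a a;
  bale_anti : forall a b, bale a b -> bale b a -> a = b;
  bale_trans : forall a b c, bale a b -> bale b c -> bale a c;
  bajoin_l : forall a b, bale a (bajoin a b);
  bajoin_r : forall a b, bale b (bajoin a b);
  bajoin_lub : forall a b c, bale a c -> bale b c -> bale (bajoin a b) c;
  bameet_l : forall a b, bale (bameet a b) a;
  bameet_r : forall a b, bale (bameet a b) b;
  bameet_glb : forall a b c, bale c a -> bale c b -> bale c (bameet a b);
  bale_add : forall a b c, bale a b -> bale (a + c) (b + c);
  bale_mul : forall a b, bale 0 a -> bale 0 b -> bale 0 (a * b);
  bale_scale : forall (r : R) a, 0 <= r -> bale 0 a -> bale 0 (r *: a);
  ba_bounded : forall a, exists n : nat, (1 <= n)%N /\ bale a (n%:R);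
  ba_arch : forall a b, (forall n : nat, (1 <= n)%N -> bale (a *+ n) b) -> bale a 0
}.

Variable L : baL.
Local Notation le := (bale L).

Definition baAbs (a : A) : A := bajoin L a (- a).
Definition baNeg (a : A) : A := bajoin L (- a) 0.

Definition isSup (X : A -> Prop) (c : A) : Prop :=
  (forall y, X y -> le y c) /\ (forall b, (forall y, X y -> le y b) -> le c b).
Definition isInf (X : A -> Prop) (c : A) : Prop :=
  (forall y, X y -> le c y) /\ (forall b, (forall y, X y -> le b y) -> le b c).

Definition dedekindComplete : Prop :=
  forall X : A -> Prop, (exists a, X a) -> (exists b, forall y, X y -> le y b) ->
    exists c, isSup X c.

Definition isRingIdeal (I : A -> Prop) : Prop :=
  I 0 /\ (forall a b, I a -> I b -> I (a + b)) /\ (forall a c, I a -> I (c * a)).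

Definition isLIdeal (I : A -> Prop) : Prop :=
  isRingIdeal I /\ (forall a b, le (baAbs a) (baAbs b) -> I b -> I a).

(* order of the quotient A/I:  [a] <= [b]  iff  a <= b + i for some i in I *)
Definition quotLe (I : A -> Prop) (a b : A) : Prop := exists i, I i /\ le a (b + i).

Definition isArchIdeal (I : A -> Prop) : Prop :=
  isLIdeal I /\
  forall a b, (forall n : nat, (1 <= n)%N -> quotLe I (a *+ n) b) -> quotLe I a 0.

Definition archBot : A -> Prop := fun a => a = 0.
Definition archTop : A -> Prop := fun _ => True.
Definition archMeet (I J : A -> Prop) : A -> Prop := fun a => I a /\ J a.
Definition archJoin (I J : A -> Prop) : A -> Prop :=
  fun a => forall K, isArchIdeal K -> (forall b, I b -> K b) -> (forall b, J b -> K b) -> K a.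

Definition archLatHom (d : Order.disp_t) (C : tbDistrLatticeType d)
    (f : (A -> Prop) -> C) : Prop :=
  f archBot = Order.bottom /\ f archTop = Order.top /\
  (forall I J, isArchIdeal I -> isArchIdeal J ->
     f (archMeet I J) = Order.meet (f I) (f J) /\
     f (archJoin I J) = Order.join (f I) (f J)).

End BaL.

Definition boolHom (d1 d2 : Order.disp_t) (B : ctbDistrLatticeType d1)
   (C : ctbDistrLatticeType d2) (g : B -> C) : Prop :=
  g Order.bottom = Order.bottom /\ g Order.top = Order.top /\
  (forall a b, g (Order.meet a b) = Order.meet (g a) (g b)) /\
  (forall a b, g (Order.join a b) = Order.join (g a) (g b)).

Definition isFreeBoolExt (R : realType) (A : comAlgType R) (L : baL A)
    (d : Order.disp_t) (B : ctbDistrLatticeType d) (e : (A -> Prop) -> B) : Prop :=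
  archLatHom L e /\
  forall (d' : Order.disp_t) (C : ctbDistrLatticeType d') (f : (A -> Prop) -> C),
    archLatHom L f ->
    (exists g : B -> C, boolHom g /\ forall I, isArchIdeal L I -> g (e I) = f I) /\
    (forall g1 g2 : B -> C, boolHom g1 -> boolHom g2 ->
       (forall I, isArchIdeal L I -> g1 (e I) = f I) ->
       (forall I, isArchIdeal L I -> g2 (e I) = f I) ->
       forall b, g1 b = g2 b).

Definition algHom (R : realType) (P Q : comAlgType R) (h : P -> Q) : Prop :=
  (forall p q, h (p + q) = h p + h q) /\ (forall p q, h (p * q) = h p * h q) /\
  h 1 = 1 /\ (forall (r : R) p, h (r *: p) = r *: h p).

(* the defining relations of R[B] *)
Definition rbRel (R : realType) (d : Order.disp_t) (B : ctbDistrLatticeType d)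
    (Q : comAlgType R) (y : B -> Q) : Prop :=
  (forall e f, y (Order.meet e f) = y e * y f) /\
  (forall e f, y (Order.join e f) = y e + y f - y e * y f) /\
  (forall e, y (Order.compl e) = 1 - y e) /\
  y Order.bottom = 0.

(* x : B -> P exhibits P as R[B] = R[x_e | e in B] / (relations),
   i.e. P is the initial commutative R-algebra with elements x_e satisfying
   the relations *)
Definition isRB (R : realType) (d : Order.disp_t) (B : ctbDistrLatticeType d)
    (P : comAlgType R) (x : B -> P) : Prop :=
  rbRel x /\
  forall (Q : comAlgType R) (y : B -> Q), rbRel y ->
    (exists h : P -> Q, algHom h /\ forall e, h (x e) = y e) /\
    (forall h1 h2 : P -> Q, algHom h1 -> algHom h2 ->
       (forall e, h1 (x e) = y e) -> (forall e, h2 (x e) = y e) ->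
       forall p, h1 p = h2 p).

Definition isDedekindCompletion (R : realType) (P D : comAlgType R)
    (LP : baL P) (LD : baL D) (j : P -> D) : Prop :=
  dedekindComplete LD /\ algHom j /\ injective j /\
  (forall p q, j (bajoin LP p q) = bajoin LD (j p) (j q)) /\
  (forall p q, j (bameet LP p q) = bameet LD (j p) (j q)) /\
  (forall z : D, exists X : D -> Prop,
     (forall y, X y -> exists p, y = j p) /\ isSup LD X z).

(* The map alpha : A -> D(R[B]).  alphaSet a s is the set
   { r x_{not I} | r in R, I in Arch(A), (a + s - r)^- in I } (inside D),
   and  isAlpha a z  means  z = alpha(a), i.e.
   z = -s + \/ alphaSet a s  for some s with a + s >= 0. *)
Section Alpha.
Variables (R : realType) (A : comAlgType R) (LA : baL A)
  (d : Order.disp_t) (B : ctbDistrLatticeType d) (e : (A -> Prop) -> B)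
  (P : comAlgType R) (x : B -> P) (D : comAlgType R) (LD : baL D) (j : P -> D).

Definition alphaSet (a : A) (s : R) : D -> Prop :=
  fun z => exists (r : R) (I : A -> Prop),
    isArchIdeal LA I /\ I (baNeg LA (a + s%:A - r%:A)) /\
    z = r *: j (x (Order.compl (e I))).

Definition isAlpha (a : A) (z : D) : Prop :=
  exists s : R, bale LA 0 (a + s%:A) /\ isSup LD (alphaSet a s) (z + s%:A).

Definition alphaImage (S : A -> Prop) : D -> Prop :=
  fun z => exists a, S a /\ isAlpha a z.
End Alpha.

(* If no finite [S0 <= S], [T0 <= T] satisfy [/\ S0 <= \/ T0], the l-ideal generated by
   all [(\/ T0 - /\ S0)^+] is proper, so by Zorn it lies in a maximal l-ideal [M].  [M] is
   prime and archimedean, hence every [a] is congruent mod [M] to a real [tau a], and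
   [tau t <= tau s] for [s \in S], [t \in T].  The map sending [I] to "[I] is not contained
   in [M]" is a lattice homomorphism [Arch(A) -> 2]; extending it to [B] and then to a
   character of [R[B]] shows that the idempotent [E = x_{not M}] is nonzero.  Multiplication
   by [E] turns [alpha a] into [tau a * E] and passes through the sups and infs involved, so
   [E * \/ alpha[T] <= E * /\ alpha[S]]; together with [/\ alpha[S] + eps <= \/ alpha[T]]
   this gives [eps * E <= 0], i.e. [E = 0].  Of [D] we only use that [j] is an injective
   algebra morphism. *)

From HB Require Import structures.
From mathcomp Require Import all_boot all_order all_algebra.
From mathcomp Require Import reals boolp classical_sets.
From mathcomp Require Import ring lra.
Import Order.TTheory GRing.Theory Num.Theory.
Set Implicit Arguments. Unset Strict Implicit. Unset Printing Implicit Defensive.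
Local Open Scope classical_set_scope.
Local Open Scope ring_scope.

(** * Lattice-ordered algebras *)

Section BaLattice.
Variables (R : realType) (A : comAlgType R) (L : baL A).
Local Notation "a <=: b" := (bale L a b) (at level 70).
Local Notation join := (bajoin L).
Local Notation meet := (bameet L).
Local Notation neg := (baNeg L).
Local Notation abs := (baAbs L).

Definition baPos (a : A) : A := join a 0.
Local Notation pos := baPos.

Lemma bale_add2r a b c : (a + c <=: b + c) <-> (a <=: b).
Proof.
split=> [h|]; last exact: bale_add.
by have := bale_add (- c) h; rewrite !addrK.
Qed.

Lemma bale_addl a b c : a <=: b -> c + a <=: c + b.
Proof. by move=> h; rewrite ![c + _]addrC; apply: bale_add. Qed.

Lemma bale_add2 a b c d : a <=: b -> c <=: d -> a + c <=: b + d.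
Proof. by move=> h1 h2; apply: bale_trans (bale_add c h1) (bale_addl b h2). Qed.

Lemma subr_bage0 a b : (0 <=: b - a) <-> (a <=: b).
Proof. by rewrite -(bale_add2r _ _ a) add0r subrK. Qed.

Lemma bale_opp a b : a <=: b -> - b <=: - a.
Proof. by move=> /subr_bage0 h; apply/subr_bage0; rewrite opprK addrC. Qed.

Lemma bale_oppr a b : a <=: - b -> b <=: - a.
Proof. by move=> /bale_opp; rewrite opprK. Qed.

Lemma addr_bage0 a b : 0 <=: a -> 0 <=: b -> 0 <=: a + b.
Proof. by move=> ha hb; rewrite -(addr0 0); apply: bale_add2. Qed.

Lemma bale_addr a b : 0 <=: b -> a <=: a + b.
Proof. by move=> h; rewrite -{1}(addr0 a); apply: bale_addl. Qed.

Lemma bajoinC a b : join a b = join b a.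
Proof. by apply: bale_anti; apply: bajoin_lub; first [exact: bajoin_l|exact: bajoin_r]. Qed.

Lemma bameetC a b : meet a b = meet b a.
Proof. by apply: bale_anti; apply: bameet_glb; first [exact: bameet_l|exact: bameet_r]. Qed.

Lemma bajoin_le2 a b c d : a <=: b -> c <=: d -> join a c <=: join b d.
Proof.
move=> h1 h2; apply: bajoin_lub.
  exact: bale_trans h1 (bajoin_l L _ _).
exact: bale_trans h2 (bajoin_r L _ _).
Qed.

Lemma bameet_le2 a b c d : a <=: b -> c <=: d -> meet a c <=: meet b d.
Proof.
move=> h1 h2; apply: bameet_glb.
  exact: bale_trans (bameet_l L _ _) h1.
exact: bale_trans (bameet_r L _ _) h2.
Qed.

Lemma bajoin_idr a b : a <=: b -> join a b = b.
Proof.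
by move=> h; apply: bale_anti; [apply: bajoin_lub => //; apply: bale_refl|apply: bajoin_r].
Qed.

Lemma bameet_idl a b : a <=: b -> meet a b = a.
Proof.
by move=> h; apply: bale_anti; [apply: bameet_l|apply: bameet_glb => //; apply: bale_refl].
Qed.

Lemma bameetxx a : meet a a = a.
Proof. exact/bameet_idl/bale_refl. Qed.

Lemma addr_bameet a b c : meet a b + c = meet (a + c) (b + c).
Proof.
apply: bale_anti.
  by apply: bameet_glb; apply: bale_add; [apply: bameet_l|apply: bameet_r].
rewrite -(bale_add2r _ _ (- c)) addrK.
by apply: bameet_glb; rewrite -[X in _ <=: X](addrK c);
  apply: bale_add; [apply: bameet_l|apply: bameet_r].
Qed.

Lemma oppr_bajoin a b : - join a b = meet (- a) (- b).
Proof.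
apply: bale_anti.
  by apply: bameet_glb; apply: bale_opp; [apply: bajoin_l|apply: bajoin_r].
by apply: bale_oppr; apply: bajoin_lub; apply: bale_oppr;
  [apply: bameet_l|apply: bameet_r].
Qed.

Lemma bajoin_addr_bameet a b : join a b + meet a b = a + b.
Proof.
have -> : meet a b = a + b - join a b.
  by rewrite oppr_bajoin addrC addr_bameet addKr [a + b]addrC addKr bameetC.
by rewrite addrC subrK.
Qed.

Lemma bale_scaler (r : R) a b : 0 <= r -> a <=: b -> r *: a <=: r *: b.
Proof.
by move=> hr /subr_bage0 h; apply/subr_bage0; rewrite -scalerBr; apply: bale_scale.
Qed.

Lemma bale_scalel (r s : R) a : r <= s -> 0 <=: a -> r *: a <=: s *: a.
Proof.
by move=> h ha; apply/subr_bage0; rewrite -scalerBl; apply: bale_scale; rewrite ?subr_ge0.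
Qed.

Lemma scaler_bameet (r : R) a b : 0 < r -> r *: meet a b = meet (r *: a) (r *: b).
Proof.
move=> r_gt0; have r_ge0 := ltW r_gt0; have ri_ge0 : 0 <= r^-1 by rewrite invr_ge0.
have scaleK c : r^-1 *: (r *: c) = c by rewrite scalerA mulVf ?lt0r_neq0 // scale1r.
apply: bale_anti.
  by apply: bameet_glb; apply: bale_scaler => //; [apply: bameet_l|apply: bameet_r].
have h : r^-1 *: meet (r *: a) (r *: b) <=: meet a b.
  by apply: bameet_glb; rewrite -[X in _ <=: X]scaleK; apply: bale_scaler => //;
    [apply: bameet_l|apply: bameet_r].
by have := bale_scaler r_ge0 h; rewrite scalerA mulfV ?lt0r_neq0 // scale1r.
Qed.

Lemma scaler_bajoin (r : R) a b : 0 < r -> r *: join a b = join (r *: a) (r *: b).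
Proof.
move=> r_gt0; apply: oppr_inj.
by rewrite -scalerN oppr_bajoin scaler_bameet // oppr_bajoin !scalerN.
Qed.

Lemma bale01 : 0 <=: 1.
Proof.
have [n [n_ge1 h]] := ba_bounded L 0.
have ni_ge0 : (0 : R) <= n%:R^-1 by rewrite invr_ge0 ler0n.
have := bale_scaler ni_ge0 h.
by rewrite scaler0 -scaler_nat scalerA mulVf ?pnatr_eq0 -?lt0n // scale1r.
Qed.

Lemma alg_bage0 (r : R) : 0 <= r -> 0 <=: r%:A.
Proof. by move=> r_ge0; apply: bale_scale => //; apply: bale01. Qed.

Lemma bale_alg (r s : R) : r <= s -> r%:A <=: s%:A.
Proof. by move=> h; apply/subr_bage0; rewrite -scalerBl; apply: alg_bage0; rewrite subr_ge0. Qed.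

Lemma ba_boundedR a : exists k : R, 0 <= k /\ a <=: k%:A.
Proof.
have [n [_ h]] := ba_bounded L a.
by exists n%:R; rewrite ler0n scaler_nat.
Qed.

Lemma bale_mull c a b : 0 <=: c -> a <=: b -> c * a <=: c * b.
Proof. by move=> hc /subr_bage0 h; apply/subr_bage0; rewrite -mulrBr; apply: bale_mul. Qed.

Lemma bale_mul_alg c y (k : R) : c <=: k%:A -> 0 <=: y -> c * y <=: k *: y.
Proof.
move=> /subr_bage0 hc hy; apply/subr_bage0.
by rewrite -mulr_algl -mulrBl; apply: bale_mul.
Qed.

Lemma baPos_ge0 a : 0 <=: pos a. Proof. exact: bajoin_r. Qed.
Lemma baNeg_ge0 a : 0 <=: neg a. Proof. exact: bajoin_r. Qed.
Lemma bale_pos a : a <=: pos a. Proof. exact: bajoin_l. Qed.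
Lemma bale_neg a : - a <=: neg a. Proof. exact: bajoin_l. Qed.

Lemma baPos_le a b : a <=: b -> pos a <=: pos b.
Proof. by move=> h; apply: bajoin_le2 => //; apply: bale_refl. Qed.

Lemma baNeg_le a b : a <=: b -> neg b <=: neg a.
Proof. by move=> h; apply: bajoin_le2; [apply: bale_opp|apply: bale_refl]. Qed.

Lemma baNeg_id0 a : 0 <=: a -> neg a = 0.
Proof. by move=> h; apply: bajoin_idr; rewrite -oppr0; apply: bale_opp. Qed.

Lemma baNegN a : neg (- a) = pos a.
Proof. by rewrite /baNeg opprK. Qed.

Lemma baPos_subNeg a : pos a - neg a = a.
Proof.
by rewrite /baPos /baNeg oppr_bajoin opprK oppr0 bajoin_addr_bameet addr0.
Qed.

Lemma bameet_posNeg a : meet (pos a) (neg a) = 0.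
Proof.
have -> : neg a = pos a - a by rewrite -{3}(baPos_subNeg a) opprB addrC subrK.
have -> : meet (pos a) (pos a - a) = meet 0 (- a) + pos a.
  by rewrite addr_bameet add0r addrC.
by rewrite -[X in meet X _]oppr0 -oppr_bajoin bajoinC addNr.
Qed.

Lemma baAbs_ge0 a : 0 <=: abs a.
Proof.
have h : a + - a <=: abs a + abs a by apply: bale_add2; [apply: bajoin_l|apply: bajoin_r].
have hi : (0 : R) <= 2^-1 by rewrite invr_ge0.
have := bale_scaler hi h.
by rewrite subrr scaler0 -mulr2n -scaler_nat scalerA mulVf ?pnatr_eq0 // scale1r.
Qed.

Lemma bale_abs a : a <=: abs a. Proof. exact: bajoin_l. Qed.
Lemma bale_absN a : - a <=: abs a. Proof. exact: bajoin_r. Qed.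

Lemma baAbs_id a : 0 <=: a -> abs a = a.
Proof.
move=> h; rewrite /baAbs bajoinC; apply: bajoin_idr.
apply: (bale_trans _ h); rewrite -oppr0; exact: bale_opp.
Qed.

Lemma baAbs_idem a : abs (abs a) = abs a.
Proof. exact/baAbs_id/baAbs_ge0. Qed.

Lemma baAbs0 : abs 0 = 0.
Proof. exact/baAbs_id/bale_refl. Qed.

Lemma baAbs_le0 a : abs a <=: 0 -> a = 0.
Proof.
move=> h; apply: bale_anti; first exact: bale_trans (bale_abs a) h.
by rewrite -[a]opprK -oppr0; apply: bale_opp; apply: bale_trans (bale_absN a) h.
Qed.

Lemma baAbs_add a b : abs (a + b) <=: abs a + abs b.
Proof.
apply: bajoin_lub; first by apply: bale_add2; apply: bale_abs.
by rewrite opprD; apply: bale_add2; apply: bale_absN.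
Qed.

Lemma baPos_le_abs a : pos a <=: abs a.
Proof. by apply: bajoin_lub; [apply: bale_abs|apply: baAbs_ge0]. Qed.

Lemma baNeg_le_abs a : neg a <=: abs a.
Proof. by apply: bajoin_lub; [apply: bale_absN|apply: baAbs_ge0]. Qed.

Lemma baPos_add a b : pos (a + b) <=: pos a + pos b.
Proof.
apply: bajoin_lub; first by apply: bale_add2; apply: bale_pos.
by apply: addr_bage0; apply: baPos_ge0.
Qed.

Lemma bameet_scalel_le (r : R) a b :
  1 <= r -> 0 <=: b -> meet (r *: a) b <=: r *: meet a b.
Proof.
move=> r_ge1 hb; rewrite scaler_bameet ?(lt_le_trans ltr01) //.
apply: bameet_le2; first exact: bale_refl.
by rewrite -{1}(scale1r b); apply: bale_scalel.
Qed.

Lemma bameet1_le0 a : 0 <=: a -> meet a 1 <=: 0 -> a <=: 0.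
Proof.
move=> ha h; have [k [k_ge0 hk]] := ba_boundedR a.
have k1_ge1 : 1 <= k + 1 by rewrite lerDr.
have hak : a <=: (k + 1) *: 1.
  by apply: bale_trans hk _; apply: bale_alg; rewrite lerDl.
rewrite -(bameet_idl hak) bameetC.
apply: bale_trans (bameet_scalel_le _ k1_ge1 ha) _.
rewrite -(scaler0 _ (k + 1)) bameetC.
exact: bale_scaler (le_trans ler01 k1_ge1) h.
Qed.

Lemma bameet_mul0 c a b :
  0 <=: c -> 0 <=: a -> 0 <=: b -> meet a b = 0 -> meet (c * a) b = 0.
Proof.
move=> hc ha hb hab; have [k [k_ge0 hk]] := ba_boundedR c.
have hk1 : c <=: (k + 1)%:A by apply: bale_trans hk _; apply: bale_alg; rewrite lerDl.
apply: bale_anti; last by apply: bameet_glb => //; apply: bale_mul.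
apply: bale_trans (bameet_le2 (bale_mul_alg hk1 ha) (bale_refl L b)) _.
rewrite -(scaler0 _ (k + 1)) -hab; apply: bameet_scalel_le => //.
by rewrite lerDr.
Qed.

(* [a * a = p * p + q * q] because disjoint positive elements have product [0]. *)
Lemma bale_sqr a : 0 <=: a * a.
Proof.
set p := pos a; set q := neg a.
have p_ge0 : 0 <=: p := baPos_ge0 a; have q_ge0 : 0 <=: q := baNeg_ge0 a.
have q_qp : meet q (q * p) = 0.
  by rewrite bameetC; apply: bameet_mul0 => //; apply: bameet_posNeg.
have pq0 : p * q = 0.
  by rewrite -(bameetxx (p * q)) {2}mulrC; apply: bameet_mul0 => //; apply: bale_mul.
have -> : a * a = p * p + q * q.
  by rewrite -(baPos_subNeg a) -/p -/q mulrBl !mulrBr pq0 [q * p]mulrC pq0; ring.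
by apply: addr_bage0; apply: bale_mul.
Qed.

Lemma baAbs_mul_le c a : exists k : R, 0 <= k /\ abs (c * a) <=: k *: abs a.
Proof.
have [k1 [k1_ge0 h1]] := ba_boundedR c.
have [k2 [k2_ge0 h2]] := ba_boundedR (- c).
set k := k1 + k2; have k_ge0 : 0 <= k by rewrite addr_ge0.
have hc : c <=: k%:A by apply: bale_trans h1 _; apply: bale_alg; rewrite lerDl.
have hNc : - c <=: k%:A by apply: bale_trans h2 _; apply: bale_alg; rewrite lerDr.
exists (k *+ 2); split; first by rewrite mulrn_wge0.
have hpn : k *: (pos a + neg a) <=: (k *+ 2) *: abs a.
  rewrite -mulr_natr -scalerA scaler_nat mulr2n; apply: bale_scaler => //.
  by apply: bale_add2; [apply: baPos_le_abs|apply: baNeg_le_abs].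
apply: bale_trans hpn; rewrite scalerDr -{1}(baPos_subNeg a) mulrBr.
have hp := baPos_ge0 a; have hn := baNeg_ge0 a.
apply: bajoin_lub; first by rewrite -mulNr; apply: bale_add2; apply: bale_mul_alg.
by rewrite opprB addrC -mulNr; apply: bale_add2; apply: bale_mul_alg.
Qed.

Section Idempotent.
Variable E : A.
Hypothesis E_idem : E * E = E.

Lemma idem_bage0 : 0 <=: E.
Proof. by rewrite -E_idem; apply: bale_sqr. Qed.

Lemma idem_subr_bage0 : 0 <=: 1 - E.
Proof.
have h : (1 - E) * (1 - E) = 1 - E by rewrite mulrBl !mulrBr E_idem; ring.
by rewrite -h; apply: bale_sqr.
Qed.

Lemma idem_split a : a = E * a + (1 - E) * a.
Proof. by rewrite mulrBl mul1r addrC subrK. Qed.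

Lemma idem_mul_split a b : E * (E * a + (1 - E) * b) = E * a.
Proof. by rewrite mulrDr !mulrA E_idem mulrBr mulr1 E_idem subrr mul0r addr0. Qed.

Lemma idem_sup_le X s b :
  isSup L X s -> (forall w, X w -> E * w <=: E * b) -> E * s <=: E * b.
Proof.
move=> [s_ub s_lub] hX.
have h : s <=: E * b + (1 - E) * s.
  apply: s_lub => w Xw; rewrite [w in w <=: _]idem_split.
  by apply: bale_add2; [exact: hX|exact: bale_mull idem_subr_bage0 (s_ub _ Xw)].
by have := bale_mull idem_bage0 h; rewrite idem_mul_split.
Qed.

Lemma idem_inf_ge X i b :
  isInf L X i -> (forall w, X w -> E * b <=: E * w) -> E * b <=: E * i.
Proof.
move=> [i_lb i_glb] hX.
have h : E * b + (1 - E) * i <=: i.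
  apply: i_glb => w Xw; rewrite [w in _ <=: w]idem_split.
  by apply: bale_add2; [exact: hX|exact: bale_mull idem_subr_bage0 (i_lb _ Xw)].
by have := bale_mull idem_bage0 h; rewrite idem_mul_split.
Qed.

End Idempotent.

Lemma foldr_bameet_le s0 ss a : a \in s0 :: ss -> foldr meet s0 ss <=: a.
Proof.
elim: ss => [|b ss IH] /= ha; first by move: ha; rewrite inE => /eqP ->; apply: bale_refl.
have [->|a_neq_b] := eqVneq a b; first exact: bameet_l.
by apply: bale_trans (bameet_r L _ _) (IH _); move: ha; rewrite !inE (negbTE a_neq_b).
Qed.

Lemma foldr_bajoin_ge t0 ts a : a \in t0 :: ts -> a <=: foldr join t0 ts.
Proof.
elim: ts => [|b ts IH] /= ha; first by move: ha; rewrite inE => /eqP ->; apply: bale_refl.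
have [->|a_neq_b] := eqVneq a b; first exact: bajoin_l.
by apply: bale_trans (IH _) (bajoin_r L _ _); move: ha; rewrite !inE (negbTE a_neq_b).
Qed.

Lemma foldr_bameet_sub s0 ss s1 ss1 :
  {subset s0 :: ss <= s1 :: ss1} -> foldr meet s1 ss1 <=: foldr meet s0 ss.
Proof.
elim: ss => [|b ss IH] h /=; first by apply: foldr_bameet_le; apply: h; rewrite inE eqxx.
apply: bameet_glb; first by apply: foldr_bameet_le; apply: h; rewrite !inE eqxx orbT.
by apply: IH => y hy; apply: h; move: hy; rewrite !inE => /orP[->|->]; rewrite ?orbT.
Qed.

Lemma foldr_bajoin_sub t0 ts t1 ts1 :
  {subset t0 :: ts <= t1 :: ts1} -> foldr join t0 ts <=: foldr join t1 ts1.
Proof.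
elim: ts => [|b ts IH] h /=; first by apply: foldr_bajoin_ge; apply: h; rewrite inE eqxx.
apply: bajoin_lub; first by apply: foldr_bajoin_ge; apply: h; rewrite !inE eqxx orbT.
by apply: IH => y hy; apply: h; move: hy; rewrite !inE => /orP[->|->]; rewrite ?orbT.
Qed.

End BaLattice.

(** * l-ideals *)

Section LIdeal.
Variables (R : realType) (A : comAlgType R) (L : baL A).
Local Notation "a <=: b" := (bale L a b) (at level 70).
Local Notation abs := (baAbs L).
Variable I : set A.
Hypothesis I_lideal : isLIdeal L I.

Lemma lideal0 : I 0. Proof. by case: I_lideal => [[]]. Qed.

Lemma lidealD a b : I a -> I b -> I (a + b).
Proof. by case: I_lideal => [[_ [+ _]] _]; apply. Qed.

Lemma lidealMl c a : I a -> I (c * a).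
Proof. by case: I_lideal => [[_ [_ +]] _]; apply. Qed.

Lemma lideal_solid a b : abs a <=: abs b -> I b -> I a.
Proof. by case: I_lideal => _; apply. Qed.

Lemma lidealN a : I a -> I (- a).
Proof. by rewrite -mulN1r; apply: lidealMl. Qed.

Lemma lidealZ (r : R) a : I a -> I (r *: a).
Proof. by rewrite -mulr_algl; apply: lidealMl. Qed.

Lemma lideal_abs a : I a -> I (abs a).
Proof. by apply: lideal_solid; rewrite baAbs_idem; apply: bale_refl. Qed.

Lemma lideal_le a b : 0 <=: a -> a <=: b -> I b -> I a.
Proof.
move=> a_ge0 ab; apply: lideal_solid.
by rewrite baAbs_id //; apply: bale_trans ab (bale_abs L b).
Qed.

Lemma lideal_neg a : I a -> I (baNeg L a).
Proof. by move=> /lideal_abs; apply: lideal_le (baNeg_ge0 L a) (baNeg_le_abs L a). Qed.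

Lemma lideal_alg_le (r : R) a : 0 < r -> r%:A <=: a -> I a -> I 1.
Proof.
move=> r_gt0 ra Ia; have := lidealZ r^-1 (lideal_le (alg_bage0 L (ltW r_gt0)) ra Ia).
by rewrite scalerA mulVf ?lt0r_neq0 // scale1r.
Qed.

Lemma lideal1 a : I 1 -> I a.
Proof. by move=> I1; rewrite -(mulr1 a); apply: lidealMl. Qed.

(* The l-ideal generated by [I] and [a]. *)
Definition lidealAdjoin (a z : A) : Prop :=
  exists2 m, I m & exists2 r : R, 0 <= r & abs z <=: abs m + r *: abs a.

Lemma lidealAdjoin_sub a : I `<=` lidealAdjoin a.
Proof. by move=> b Ib; exists b => //; exists 0; rewrite // scale0r addr0; apply: bale_refl. Qed.

Lemma lidealAdjoin_self a : lidealAdjoin a a.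
Proof.
exists 0; first exact: lideal0.
by exists 1; rewrite // baAbs0 add0r scale1r; apply: bale_refl.
Qed.

Lemma lidealAdjoin_lideal a : isLIdeal L (lidealAdjoin a).
Proof.
split; last first.
  move=> b c bc [m Im [r r_ge0 hc]]; exists m => //; exists r => //.
  exact: bale_trans bc hc.
split; first exact/lidealAdjoin_sub/lideal0.
split.
  move=> b c [m1 Im1 [r1 r1_ge0 h1]] [m2 Im2 [r2 r2_ge0 h2]].
  exists (abs m1 + abs m2); first by apply: lidealD; apply: lideal_abs.
  exists (r1 + r2); first by rewrite addr_ge0.
  rewrite [abs (abs m1 + _)]baAbs_id; last by apply: addr_bage0; apply: baAbs_ge0.
  apply: bale_trans (baAbs_add L b c) _.
  have -> : abs m1 + abs m2 + (r1 + r2) *: abs a =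
      (abs m1 + r1 *: abs a) + (abs m2 + r2 *: abs a) by rewrite scalerDl; ring.
  exact: bale_add2.
move=> b c [m Im [r r_ge0 hb]].
have [k [k_ge0 hk]] := baAbs_mul_le L c b.
exists (k *: abs m); first by apply: lidealZ; apply: lideal_abs.
exists (k * r); first by rewrite mulr_ge0.
rewrite [abs (k *: _)]baAbs_id; last by apply: bale_scale => //; apply: baAbs_ge0.
by apply: bale_trans hk _; rewrite -scalerA -scalerDr; apply: bale_scaler.
Qed.

End LIdeal.

Lemma mem_cons_catl (T : eqType) (x0 y0 : T) xs ys :
  {subset x0 :: xs <= x0 :: (xs ++ y0 :: ys)}.
Proof. by move=> a h; rewrite -cat_cons mem_cat h. Qed.

Lemma mem_cons_catr (T : eqType) (x0 y0 : T) xs ys :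
  {subset y0 :: ys <= x0 :: (xs ++ y0 :: ys)}.
Proof. by move=> a h; rewrite -cat_cons mem_cat h orbT. Qed.

Section GapIdeal.
Variables (R : realType) (A : comAlgType R) (L : baL A) (S T : set A).
Local Notation "a <=: b" := (bale L a b) (at level 70).
Local Notation join := (bajoin L).
Local Notation meet := (bameet L).

Definition finFamily (X : set A) (x0 : A) (xs : seq A) : Prop :=
  X x0 /\ forall a, a \in xs -> X a.

Definition coverGap (s0 : A) (ss : seq A) (t0 : A) (ts : seq A) : A :=
  baPos L (foldr join t0 ts - foldr meet s0 ss).

(* The l-ideal generated by the gaps [(\/ T0 - /\ S0)^+] of finite [S0 <= S], [T0 <= T];
   the alternative [z = 0] covers an empty [S] or [T]. *)
Definition gapIdeal (z : A) : Prop :=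
  z = 0 \/ exists s0 ss t0 ts (r : R),
    [/\ finFamily S s0 ss, finFamily T t0 ts, 0 <= r & baAbs L z <=: r *: coverGap s0 ss t0 ts].

Lemma finFamily_cat X x0 xs y0 ys :
  finFamily X x0 xs -> finFamily X y0 ys -> finFamily X x0 (xs ++ y0 :: ys).
Proof.
move=> [Xx0 Xxs] [Xy0 Xys]; split=> // a.
by rewrite mem_cat inE => /orP[|/orP[/eqP->|]]; [exact: Xxs| |exact: Xys].
Qed.

Lemma coverGap_le s0 ss t0 ts s1 ss1 t1 ts1 :
  {subset s0 :: ss <= s1 :: ss1} -> {subset t0 :: ts <= t1 :: ts1} ->
  coverGap s0 ss t0 ts <=: coverGap s1 ss1 t1 ts1.
Proof.
move=> hs ht; apply: baPos_le; apply: bale_add2; first exact: foldr_bajoin_sub.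
exact/bale_opp/foldr_bameet_sub.
Qed.

Lemma gapIdeal_lideal : isLIdeal L gapIdeal.
Proof.
have solid a b : baAbs L a <=: baAbs L b -> gapIdeal b -> gapIdeal a.
  move=> ab [b0|[s0 [ss [t0 [ts [r [Ss Tt r_ge0 hb]]]]]]].
    by left; rewrite b0 baAbs0 in ab; exact: baAbs_le0 ab.
  by right; exists s0, ss, t0, ts, r; split=> //; apply: bale_trans ab hb.
split; last exact: solid.
split; first by left.
split.
- move=> a b [->|ha]; first by rewrite add0r.
  case=> [->|hb]; first by rewrite addr0; right.
  case: ha hb => [s0 [ss [t0 [ts [r [Ss Tt r_ge0 ha]]]]]].
  move=> [s1 [ss1 [t1 [ts1 [r' [Ss' Tt' r'_ge0 hb]]]]]].
  right; exists s0, (ss ++ s1 :: ss1), t0, (ts ++ t1 :: ts1), (r + r').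
  split; [exact: finFamily_cat|exact: finFamily_cat|by rewrite addr_ge0|].
  apply: bale_trans (baAbs_add L a b) _; rewrite scalerDl; apply: bale_add2.
    apply: bale_trans ha _; apply: bale_scaler => //.
    by apply: coverGap_le; apply: mem_cons_catl.
  apply: bale_trans hb _; apply: bale_scaler => //.
  by apply: coverGap_le; apply: mem_cons_catr.
- move=> a c [->|[s0 [ss [t0 [ts [r [Ss Tt r_ge0 ha]]]]]]]; first by left; rewrite mulr0.
  have [k [k_ge0 hk]] := baAbs_mul_le L c a.
  right; exists s0, ss, t0, ts, (k * r); split=> //; first by rewrite mulr_ge0.
  by apply: bale_trans hk _; rewrite -scalerA; apply: bale_scaler.
Qed.

Lemma gapIdeal_pos s t : S s -> T t -> gapIdeal (baPos L (t - s)).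
Proof.
move=> Ss Tt; right; exists s, [::], t, [::], 1.
split=> //; rewrite scale1r baAbs_id; [exact: bale_refl|exact: baPos_ge0].
Qed.

Lemma gapIdeal1_cover : gapIdeal 1 ->
  exists s0 ss t0 ts,
    [/\ finFamily S s0 ss, finFamily T t0 ts & foldr meet s0 ss <=: foldr join t0 ts].
Proof.
case=> [/eqP|[s0 [ss [t0 [ts [r [Ss Tt r_ge0 h1]]]]]]]; first by rewrite oner_eq0.
exists s0, ss, t0, ts; split=> //.
set d := foldr meet s0 ss - foldr join t0 ts.
have gap_neg : coverGap s0 ss t0 ts = baNeg L d by rewrite /coverGap /baNeg /d opprB.
rewrite gap_neg (baAbs_id (bale01 L)) in h1.
suff /(bale_trans (bale_pos L d)) /bale_opp : baPos L d <=: 0.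
  by rewrite oppr0 /d opprB; move/subr_bage0.
have r1_ge1 : 1 <= r + 1 by rewrite lerDr.
have h1' : 1 <=: (r + 1) *: baNeg L d.
  by apply: bale_trans h1 (bale_scalel _ (baNeg_ge0 L d)); rewrite lerDl.
apply: bameet1_le0 (baPos_ge0 L d) _.
apply: bale_trans (bameet_le2 (bale_refl L _) h1') _; rewrite bameetC.
apply: bale_trans (bameet_scalel_le _ r1_ge1 (baPos_ge0 L d)) _.
by rewrite bameetC bameet_posNeg scaler0; apply: bale_refl.
Qed.

End GapIdeal.

(** * Maximal l-ideals *)

Section MaximalLIdeal.
Variables (R : realType) (A : comAlgType R) (L : baL A).

Definition isMaxLIdeal (M : set A) : Prop :=
  [/\ isLIdeal L M, ~ M 1 & forall N, isLIdeal L N -> M `<=` N -> ~ N 1 -> N `<=` M].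

Lemma lideal_chain_union (U : Type) (F : set U) (f : U -> set A) (K : set A) :
  isLIdeal L K -> (forall i, F i -> isLIdeal L (f i) /\ K `<=` f i) ->
  (forall i k, F i -> F k -> f i `<=` f k \/ f k `<=` f i) ->
  isLIdeal L (K `|` \bigcup_(i in F) f i).
Proof.
move=> HK HF Fchain.
have common a b : (K `|` \bigcup_(i in F) f i) a -> (K `|` \bigcup_(i in F) f i) b ->
    (K a /\ K b) \/ exists2 i, F i & f i a /\ f i b.
  case=> [Ka|[i Fi ia]] [Kb|[k Fk kb]]; [by left|right..].
  - by exists k => //; split=> //; apply: (HF k Fk).2.
  - by exists i => //; split=> //; apply: (HF i Fi).2.
  - by case: (Fchain i k Fi Fk) => h; [exists k|exists i] => //; split=> //; apply: h.
split; [split; [by left; apply: lideal0 HK|split]|].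
- move=> a b ha hb; case: (common a b ha hb) => [[Ka Kb]|[i Fi [ia ib]]].
    by left; exact: (lidealD HK Ka Kb).
  by right; exists i => //; exact: (lidealD (HF i Fi).1 ia ib).
- move=> a c [Ka|[i Fi ia]]; first by left; exact: (lidealMl HK _ Ka).
  by right; exists i => //; exact: (lidealMl (HF i Fi).1 _ ia).
- move=> a b ab [Kb|[i Fi ib]]; first by left; exact: (lideal_solid HK ab Kb).
  by right; exists i => //; exact: (lideal_solid (HF i Fi).1 ab ib).
Qed.

Lemma exists_maxLIdeal K : isLIdeal L K -> ~ K 1 -> exists2 M, isMaxLIdeal M & K `<=` M.
Proof.
move=> HK K1.
pose good I := [/\ isLIdeal L I, K `<=` I & ~ I 1].
pose sub (I J : {I | good I}) := `[< sval I `<=` sval J >].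
have K_good : good K by split=> //; apply: subset_refl.
have [||F Fchain|[M [HM KM M1]] Mmax] := @ZL_preorder _ (exist good K K_good) sub.
- by move=> I; apply/asboolP.
- by move=> I J H /asboolP IJ /asboolP JH; apply/asboolP; apply: subset_trans IJ JH.
- have U_lideal : isLIdeal L (K `|` \bigcup_(I in F) sval I).
    apply: lideal_chain_union => // [I _|I J FI FJ]; first by case: (svalP I).
    by case: (Fchain I J FI FJ) => /asboolP; [left|right].
  have U1 : ~ (K `|` \bigcup_(I in F) sval I) 1 by case=> [//|[I _]]; case: (svalP I).
  exists (exist good _ (And3 U_lideal (fun a Ka => or_introl Ka) U1)) => I FI.
  by apply/asboolP => a Ia; right; exists I.
exists M => //; split=> // N HN MN N1.
by have /asboolP := Mmax (exist good N (And3 HN (subset_trans KM MN) N1)) (asboolT MN).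
Qed.

End MaximalLIdeal.

Section MaxLIdealTheory.
Variables (R : realType) (A : comAlgType R) (L : baL A) (M : set A).
Hypothesis M_max : isMaxLIdeal L M.
Local Notation "a <=: b" := (bale L a b) (at level 70).
Local Notation pos := (baPos L).
Local Notation neg := (baNeg L).
Local Notation abs := (baAbs L).

Let M_lideal : isLIdeal L M. Proof. by case: M_max. Qed.
Let M_proper : ~ M 1. Proof. by case: M_max. Qed.

Lemma maxl_alg_le0 (r : R) z : r%:A <=: z -> M z -> r <= 0.
Proof.
move=> rz Mz; rewrite leNgt; apply/negP => r_gt0.
exact: M_proper (lideal_alg_le M_lideal r_gt0 rz Mz).
Qed.

Lemma maxl_notin_ge1 z : 1 <=: z -> ~ M z.
Proof.
move=> h Mz; suff : (1 : R) <= 0 by rewrite ler10.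
by apply: maxl_alg_le0 Mz; rewrite scale1r.
Qed.

Lemma maxl_notin a :
  ~ M a -> exists m (r : R), [/\ M m, 0 <=: m, 0 <= r & 1 <=: m + r *: abs a].
Proof.
move=> Ma; have [_ _ Mmax] := M_max.
have [[m Mm [r r_ge0 h]]|Ma1] := pselect (lidealAdjoin L M a 1).
  exists (abs m), r; split=> //; [exact: (lideal_abs M_lideal)|exact: baAbs_ge0|].
  by rewrite (baAbs_id (bale01 L)) in h.
case: Ma; apply: (Mmax _ (lidealAdjoin_lideal M_lideal a) (@lidealAdjoin_sub _ _ L M a) Ma1).
exact: (lidealAdjoin_self M_lideal).
Qed.

Lemma maxl_prime x y : 0 <=: x -> 0 <=: y -> M (bameet L x y) -> M x \/ M y.
Proof.
move=> x_ge0 y_ge0 Mxy; apply: contrapT => /not_orP[Mx My].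
have [m1 [r1 [Mm1 m1_ge0 r1_ge0]]] := maxl_notin Mx.
rewrite baAbs_id // => h1.
have [m2 [r2 [Mm2 m2_ge0 r2_ge0]]] := maxl_notin My.
rewrite baAbs_id // => h2.
set rho := r1 + r2 + 1; have rho_gt0 : 0 < rho by rewrite /rho; lra.
have hx : 1 <=: (m1 + m2) + rho *: x.
  apply: bale_trans h1 _; apply: bale_add2; first exact: bale_addr.
  by apply: bale_scalel => //; rewrite /rho; lra.
have hy : 1 <=: (m1 + m2) + rho *: y.
  apply: bale_trans h2 _; apply: bale_add2; first by rewrite addrC; apply: bale_addr.
  by apply: bale_scalel => //; rewrite /rho; lra.
apply: (@maxl_notin_ge1 (rho *: bameet L x y + (m1 + m2))).
  by rewrite scaler_bameet // addr_bameet; apply: bameet_glb; rewrite addrC.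
by apply: (lidealD M_lideal); [apply: (lidealZ M_lideal)|apply: (lidealD M_lideal)].
Qed.

Lemma maxl_arch : isArchIdeal L M.
Proof.
split=> // a b hn.
suff M_pos : M (pos a) by exists (pos a); split=> //; rewrite add0r; apply: bale_pos.
apply: contrapT => /maxl_notin [m [r [Mm m_ge0 r_ge0]]].
rewrite (baAbs_id (baPos_ge0 L a)) => h1.
have [k [k_ge0 hk]] := ba_boundedR L b.
have k1_ge0 : 0 <= k + 1 by rewrite addr_ge0.
have kr_ge0 : 0 <= (k + 1) * r by rewrite mulr_ge0.
set n := (Num.Def.archi_bound ((k + 1) * r)).+1.
have nr : (k + 1) * r <= n%:R.
  by apply: le_trans (ltW (archi_boundP kr_ge0)) _; rewrite ler_nat.
have [i [Mi hi]] := hn n isT.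
have hna : n%:R *: pos a <=: k%:A + abs i.
  have -> : n%:R *: pos a = pos (a *+ n) by rewrite scaler_bajoin ?ltr0n // scaler0 scaler_nat.
  apply: bale_trans (baPos_le hi) _; apply: bale_trans (baPos_add L b i) _.
  apply: bale_add2; last exact: baPos_le_abs.
  by apply: bajoin_lub => //; apply: alg_bage0.
apply: (@maxl_notin_ge1 ((k + 1) *: m + abs i)); last first.
  by apply: (lidealD M_lideal); [apply: (lidealZ M_lideal)|apply: (lideal_abs M_lideal)].
rewrite -(bale_add2r L _ _ k%:A).
have -> : 1 + k%:A = (k + 1) *: (1 : A) by rewrite scalerDl scale1r addrC.
have -> : (k + 1) *: m + abs i + k%:A = (k + 1) *: m + (k%:A + abs i) by ring.
apply: bale_trans (bale_scaler k1_ge0 h1) _; rewrite scalerDr scalerA.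
apply: bale_addl; apply: bale_trans hna.
by apply: bale_scalel => //; apply: baPos_ge0.
Qed.

Lemma maxl_neg_approx z : (forall d : R, 0 < d -> M (neg (z + d%:A))) -> M (neg z).
Proof.
move=> h; have [_ M_arch] := maxl_arch.
have [i [Mi hi]] : quotLe L M (neg z) 0.
  apply: (M_arch _ 1) => n n_ge1.
  have n_gt0 : (0 : R) < n%:R by rewrite ltr0n.
  set d := (n%:R : R)^-1; have d_gt0 : 0 < d by rewrite invr_gt0.
  exists (n%:R *: neg (z + d%:A)); split; first exact/(lidealZ M_lideal)/h.
  have hz : neg z <=: d%:A + neg (z + d%:A).
    apply: bajoin_lub.
      have -> : - z = d%:A + - (z + d%:A) by ring.
      exact/bale_addl/bale_neg.
    by apply: addr_bage0; [apply: alg_bage0; rewrite ltW|apply: baNeg_ge0].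
  rewrite -scaler_nat; apply: bale_trans (bale_scaler (ltW n_gt0) hz) _.
  by rewrite scalerDr scalerA mulfV ?lt0r_neq0 // scale1r; apply: bale_refl.
by rewrite add0r in hi; exact: (lideal_le M_lideal (baNeg_ge0 L z) hi Mi).
Qed.

Lemma maxl_residue a : exists t : R, M (a - t%:A).
Proof.
pose X : set R := fun r => M (neg (a - r%:A)).
have [k [_ hk]] := ba_boundedR L a.
have [k' [_ hk']] := ba_boundedR L (- a).
have X_ub r : X r -> r <= k.
  move=> Xr; rewrite -subr_le0; apply: maxl_alg_le0 Xr.
  apply: bale_trans (bale_neg L _); rewrite opprB scalerBl.
  exact/bale_addl/bale_opp.
have X_lb : X (- k').
  suff a_ge : 0 <=: a - (- k')%:A by rewrite /X baNeg_id0 //; exact: lideal0 M_lideal.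
  have -> : a - (- k')%:A = k'%:A - (- a) by rewrite scaleNr; ring.
  exact/subr_bage0.
have X_sup : has_sup X by split; [exists (- k')|exists k => r /X_ub].
set t := sup X; exists t.
have Mneg : M (neg (a - t%:A)).
  apply: maxl_neg_approx => d d_gt0.
  have [r Xr tr] := sup_adherent d_gt0 X_sup.
  apply: (lideal_le M_lideal (baNeg_ge0 L _) _ Xr); apply: baNeg_le.
  have -> : a - t%:A + d%:A = a - (t - d)%:A by rewrite scalerBl; ring.
  by apply/bale_addl/bale_opp/bale_alg; rewrite ltW.
have Mpos : M (pos (a - t%:A)).
  rewrite -baNegN; apply: maxl_neg_approx => d d_gt0.
  have notX : ~ X (t + d).
    by move=> Xtd; have := sup_upper_bound X_sup Xtd; rewrite -/t => ?; lra.
  have := maxl_prime (baPos_ge0 L (a - (t + d)%:A)) (baNeg_ge0 L (a - (t + d)%:A)).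
  rewrite bameet_posNeg => /(_ (lideal0 M_lideal)) [|//].
  have -> : - (a - t%:A) + d%:A = - (a - (t + d)%:A) by rewrite scalerDl; ring.
  by rewrite baNegN.
by rewrite -(baPos_subNeg L (a - t%:A)); apply: (lidealD M_lideal Mpos); apply: (lidealN M_lideal).
Qed.

Lemma maxl_residue_le s t (sigma tau : R) :
  M (pos (t - s)) -> M (s - sigma%:A) -> M (t - tau%:A) -> tau <= sigma.
Proof.
move=> Mts Ms Mt; rewrite -subr_le0.
apply: (@maxl_alg_le0 _ (pos (t - s) + (s - sigma%:A) - (t - tau%:A))).
  have -> : (tau - sigma)%:A = (t - s) + (s - sigma%:A) - (t - tau%:A) by rewrite scalerBl; ring.
  by do 2 apply: bale_add; apply: bale_pos.
by apply: (lidealD M_lideal); [apply: (lidealD M_lideal)|apply: (lidealN M_lideal)].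
Qed.

End MaxLIdealTheory.

Section ArchJoin.
Variables (R : realType) (A : comAlgType R) (L : baL A).

Lemma archJoin_sub I J K :
  isArchIdeal L K -> archJoin L I J `<=` K <-> I `<=` K /\ J `<=` K.
Proof.
move=> HK; split=> [IJK|[IK JK] a IJa]; last exact: IJa K HK IK JK.
by split=> a ha; apply: IJK => K' _ IK' JK'; [apply: IK'|apply: JK'].
Qed.

Lemma archJoin_idl I J : isArchIdeal L I -> J `<=` I -> archJoin L I J = I.
Proof.
move=> HI JI; apply/funext => a; apply/propext; split; last by move=> Ia K _ IK _; apply: IK.
by move=> IJa; apply: IJa HI (@subset_refl _ I) JI.
Qed.

Lemma archJoin_lideal I J : isLIdeal L (archJoin L I J).
Proof.
split; last by move=> a b ab Jb K HK IK JK; exact: (lideal_solid HK.1 ab (Jb K HK IK JK)).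
split; first by move=> K HK _ _; exact: (lideal0 HK.1).
split.
  by move=> a b Ja Jb K HK IK JK; exact: (lidealD HK.1 (Ja K HK IK JK) (Jb K HK IK JK)).
by move=> a c Ja K HK IK JK; exact: (lidealMl HK.1 c (Ja K HK IK JK)).
Qed.

End ArchJoin.

Section MaxLIdealArch.
Variables (R : realType) (A : comAlgType R) (L : baL A) (M : set A).
Hypothesis M_max : isMaxLIdeal L M.

Lemma maxl_archJoin_top J : ~ J `<=` M -> archJoin L M J = @archTop _ A.
Proof.
move=> JM; have [_ _ Mmax] := M_max.
have MJ_lideal := archJoin_lideal L M J.
have M_MJ : M `<=` archJoin L M J by move=> b Mb K _ MK _; apply: MK.
have J_MJ : J `<=` archJoin L M J by move=> b Jb K _ _ JK; apply: JK.
have MJ1 : archJoin L M J 1.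
  by apply: contrapT => MJ1; apply: JM => a /J_MJ; apply: (Mmax _ MJ_lideal M_MJ MJ1).
by apply/funext => a; apply/propext; split=> // _; exact: (lideal1 MJ_lideal).
Qed.

Lemma maxl_meet_sub I J : isLIdeal L I -> isLIdeal L J ->
  archMeet I J `<=` M <-> I `<=` M \/ J `<=` M.
Proof.
move=> HI HJ; have [M_lideal _ _] := M_max.
split=> [IJM|[IM a [Ia _]|JM a [_ Ja]]]; last 2 first.
- exact: IM.
- exact: JM.
apply: contrapT => /not_orP[/existsNP[k /not_implyP[Ik Mk]] /existsNP[l /not_implyP[Jl Ml]]].
have abs_ge0 := baAbs_ge0 L.
have Mkl : M (bameet L (baAbs L k) (baAbs L l)).
  apply: IJM; split.
    exact: (lideal_le HI (bameet_glb (abs_ge0 k) (abs_ge0 l)) (bameet_l L _ _) (lideal_abs HI Ik)).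
  exact: (lideal_le HJ (bameet_glb (abs_ge0 k) (abs_ge0 l)) (bameet_r L _ _) (lideal_abs HJ Jl)).
have abs_solid a : M (baAbs L a) -> M a.
  by move=> Ma; apply: (lideal_solid M_lideal _ Ma); rewrite baAbs_idem; apply: bale_refl.
by case: (maxl_prime M_max (abs_ge0 k) (abs_ge0 l) Mkl) => /abs_solid.
Qed.

Definition outside (K : set A) : bool := ~~ `[< K `<=` M >].

Lemma outside_archLatHom : archLatHom L outside.
Proof.
have [M_lideal M1 _] := M_max.
have bot_sub : @archBot _ A `<=` M by move=> a ->; exact: (lideal0 M_lideal).
have top_nsub : ~ @archTop _ A `<=` M by move=> top_sub; exact: M1 (top_sub 1 I).
split; first by rewrite /outside (asboolT bot_sub).
split; first by rewrite /outside (asboolF top_nsub).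
move=> I J HI HJ; rewrite /outside; split.
  by rewrite (propext (maxl_meet_sub HI.1 HJ.1)) asbool_or negb_or.
by rewrite (propext (archJoin_sub _ _ (maxl_arch M_max))) asbool_and negb_and.
Qed.

End MaxLIdealArch.

(** * The idempotent [x_{not M}] *)

Lemma algHom0 (R : realType) (P Q : comAlgType R) (h : P -> Q) : algHom h -> h 0 = 0.
Proof. by case=> h_add _; apply: (addrI (h 0)); rewrite -h_add !addr0. Qed.

Lemma boolHom_compl d (B : ctbDistrLatticeType d) (g : B -> bool) b :
  boolHom g -> g (Order.compl b) = ~~ g b.
Proof.
move=> [g0 [g1 [g_meet g_join]]].
have := g_meet (Order.compl b) b; have := g_join (Order.compl b) b.
rewrite Order.CTBDistrLatticeTheory.meetCx Order.CTBDistrLatticeTheory.joinCx g0 g1.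
by case: (g b); case: (g (Order.compl b)).
Qed.

(* A boolean-algebra map [g : B -> 2] induces a character of [R[B]] sending [x_b] to [g b]. *)
Lemma isRB_x_neq0 (R : realType) d (B : ctbDistrLatticeType d) (P : comAlgType R)
    (x : B -> P) (g : B -> bool) b :
  isRB x -> boolHom g -> g b -> x b != 0.
Proof.
move=> [_ x_univ] g_hom gb; have g_compl u := boolHom_compl u g_hom.
have [g0 [_ [g_meet g_join]]] := g_hom.
pose y c : R^o := (g c)%:R.
have y_rel : rbRel y.
  split; [|split; [|split]].
  - by move=> u v; rewrite /y g_meet; case: (g u); case: (g v); rewrite /= ?mulr1 ?mulr0.
  - move=> u v; rewrite /y g_join.
    by case: (g u); case: (g v); rewrite /= ?mulr1 ?mulr0 ?subr0 ?addr0 ?add0r ?addrK.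
  - by move=> u; rewrite /y g_compl; case: (g u); rewrite /= ?subrr ?subr0.
  - by rewrite /y g0.
have [[h [h_hom hxy]] _] := x_univ _ y y_rel.
apply/eqP => xb0; have := hxy b; rewrite xb0 (algHom0 h_hom) /y gb.
by move/eqP; rewrite eq_sym oner_eq0.
Qed.

Section Projection.
Variables (R : realType) (A : comAlgType R) (LA : baL A)
  (d : Order.disp_t) (B : ctbDistrLatticeType d) (e : set A -> B)
  (P : comAlgType R) (x : B -> P) (D : comAlgType R) (LD : baL D) (j : P -> D)
  (M : set A).
Hypotheses (He : isFreeBoolExt LA e) (Hx : isRB x) (j_hom : algHom j)
  (j_inj : injective j) (M_max : isMaxLIdeal LA M).
Local Notation "a <=D b" := (bale LD a b) (at level 70).
Local Notation E := (j (x (Order.compl (e M)))).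

Let M_lideal : isLIdeal LA M. Proof. by case: M_max. Qed.

Lemma projM_neq0 : E != 0.
Proof.
have [g [g_hom gM]] := (He.2 _ _ _ (outside_archLatHom M_max)).1.
have gE : g (Order.compl (e M)).
  by rewrite (boolHom_compl _ g_hom) (gM _ (maxl_arch M_max)) /outside negbK; apply/asboolP.
apply: contra_neq (isRB_x_neq0 Hx g_hom gE) => E0.
by apply: j_inj; rewrite E0 (algHom0 j_hom).
Qed.

Lemma projM_idem : E * E = E.
Proof.
have [_ [j_mul _]] := j_hom; have [x_meet _] := Hx.1.
by rewrite -j_mul -x_meet meetxx.
Qed.

Lemma projM_mul_x J : isArchIdeal LA J ->
  E * j (x (Order.compl (e J))) = j (x (Order.compl (e (archJoin LA M J)))).
Proof.
move=> HJ; have [_ [j_mul _]] := j_hom; have [x_meet _] := Hx.1.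
have [_ [_ e_lat]] := He.1.
rewrite -j_mul -x_meet -Order.CTBDistrLatticeTheory.complU.
by rewrite (e_lat _ _ (maxl_arch M_max) HJ).2.
Qed.

Lemma projM_mul_sub J : isArchIdeal LA J -> J `<=` M -> E * j (x (Order.compl (e J))) = E.
Proof. by move=> HJ JM; rewrite projM_mul_x // (archJoin_idl (maxl_arch M_max) JM). Qed.

Lemma projM_mul_nsub J : isArchIdeal LA J -> ~ J `<=` M -> E * j (x (Order.compl (e J))) = 0.
Proof.
move=> HJ JM; rewrite projM_mul_x // maxl_archJoin_top //.
have [_ [e_top _]] := He.1; have [_ [_ [_ x_bot]]] := Hx.1.
by rewrite e_top Order.CTBDistrLatticeTheory.compl1 x_bot (algHom0 j_hom).
Qed.

Lemma projM_alpha_le a z (t : R) : M (a - t%:A) -> isAlpha LA e x LD j a z -> E * z <=D t *: E.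
Proof.
move=> Mat [s [as_ge0 z_sup]].
have E_ge0 := idem_bage0 LD projM_idem.
have ts_ge0 : 0 <= t + s.
  rewrite -oppr_le0; apply: (maxl_alg_le0 M_max _ Mat).
  have -> : a - t%:A = (- (t + s))%:A + (a + s%:A) by rewrite scaleNr scalerDl; ring.
  exact: bale_addr.
suff : E * (z + s%:A) <=D E * (t + s)%:A.
  by rewrite mulrDr !mulr_algr scalerDl bale_add2r.
apply: (idem_sup_le projM_idem z_sup) => _ [r [J [HJ [MJ ->]]]].
rewrite -scalerAr mulr_algr.
have [JM|JM] := pselect (J `<=` M); last first.
  by rewrite projM_mul_nsub // scaler0; apply: bale_scale.
rewrite projM_mul_sub //; apply: bale_scalel E_ge0.
rewrite -subr_le0; apply: (maxl_alg_le0 M_max (z := baNeg LA (a + s%:A - r%:A) + (a - t%:A))).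
  have -> : (r - (t + s))%:A = - (a + s%:A - r%:A) + (a - t%:A) by rewrite !scalerBl scalerDl; ring.
  exact/bale_add/bale_neg.
exact: (lidealD M_lideal (JM _ MJ) Mat).
Qed.

Lemma projM_alpha_ge a z (t : R) : M (a - t%:A) -> isAlpha LA e x LD j a z -> t *: E <=D E * z.
Proof.
move=> Mat [s [_ [z_ub _]]].
have hin : alphaSet LA e x j a s ((t + s) *: E).
  exists (t + s), M; split; first exact: maxl_arch.
  split=> //; apply: (lideal_neg M_lideal).
  by have -> : a + s%:A - (t + s)%:A = a - t%:A by rewrite scalerDl; ring.
have := bale_mull (idem_bage0 LD projM_idem) (z_ub _ hin).
by rewrite -scalerAr projM_idem mulrDr mulr_algr scalerDl bale_add2r.
Qed.

Lemma projM_alpha a z (t : R) : M (a - t%:A) -> isAlpha LA e x LD j a z -> E * z = t *: E.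
Proof.
by move=> Mat hz; apply: bale_anti; [apply: projM_alpha_le Mat hz|apply: projM_alpha_ge Mat hz].
Qed.

Lemma projM_no_gap S T (eps : R) u v :
  0 < eps -> (forall s t, S s -> T t -> M (baPos LA (t - s))) ->
  isInf LD (alphaImage LA e x LD j S) u -> isSup LD (alphaImage LA e x LD j T) v ->
  ~ u + eps%:A <=D v.
Proof.
move=> eps_gt0 hST u_inf v_sup uv.
have E_ge0 := idem_bage0 LD projM_idem.
have Ev_le s z : S s -> isAlpha LA e x LD j s z -> E * v <=D E * z.
  move=> Ss hz; have [sigma Ms] := maxl_residue M_max s.
  rewrite (projM_alpha Ms hz) -mulr_algr.
  apply: (idem_sup_le projM_idem v_sup) => w [t [Tt ht]].
  have [tau Mt] := maxl_residue M_max t.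
  rewrite (projM_alpha Mt ht) mulr_algr; apply: bale_scalel E_ge0.
  exact: (maxl_residue_le M_max (hST s t Ss Tt) Ms Mt).
have Evu : E * v <=D E * u.
  by apply: (idem_inf_ge projM_idem u_inf) => w [s [Ss hz]]; apply: Ev_le Ss hz.
have := bale_trans (bale_mull E_ge0 uv) Evu.
rewrite mulrDr mulr_algr -[X in _ <=D X]add0r addrC bale_add2r => epsE_le0.
have epsi_ge0 : 0 <= eps^-1 by rewrite invr_ge0 ltW.
have := bale_scaler epsi_ge0 epsE_le0.
rewrite scalerA mulVf ?gt_eqF // scale1r scaler0 => E_le0.
by move/eqP: projM_neq0; apply; exact: (bale_anti E_le0 E_ge0).
Qed.

End Projection.

Theorem mainTheorem9 (R : realType) (A : comAlgType R) (LA : baL A)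
  (d : Order.disp_t) (B : ctbDistrLatticeType d) (e : (A -> Prop) -> B)
  (He : isFreeBoolExt LA e)
  (P : comAlgType R) (LP : baL P) (x : B -> P) (Hx : isRB x)
  (D : comAlgType R) (LD : baL D) (j : P -> D) (Hj : isDedekindCompletion LP LD j)
  (S T : A -> Prop) (eps : R) :
  0 < eps ->
  (exists u v : D,
     isInf LD (alphaImage LA e x LD j S) u /\
     isSup LD (alphaImage LA e x LD j T) v /\
     bale LD (u + eps%:A) v) ->
  exists (s0 : A) (ss : seq A) (t0 : A) (ts : seq A),
    S s0 /\ (forall a, a \in ss -> S a) /\
    T t0 /\ (forall a, a \in ts -> T a) /\
    bale LA (foldr (bameet LA) s0 ss) (foldr (bajoin LA) t0 ts).
Proof.
move=> eps_gt0 [u [v [u_inf [v_sup uv]]]].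
have [_ [j_hom [j_inj _]]] := Hj.
have [/gapIdeal1_cover|gap1] := pselect (gapIdeal LA S T 1).
  by case=> [s0 [ss [t0 [ts [[Ss0 Sss] [Tt0 Tts] le]]]]]; exists s0, ss, t0, ts.
have [M M_max gapM] := exists_maxLIdeal (gapIdeal_lideal LA S T) gap1.
exfalso; apply: (projM_no_gap He Hx j_hom j_inj M_max eps_gt0 _ u_inf v_sup uv).
by move=> s t Ss Tt; apply/gapM/gapIdeal_pos.
Qed.
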